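(* For every integer $k\ge 1$ there exists a $2$-connected (finite, simple) graph $G_k$ with pathwidth at least $k$ and cocircumference at most $2k$.
   Context: A bond of a graph $G$ is an inclusion-wise minimal set of edges $F$ such that $G-F$ has more connected components than $G$; the cocircumference is the maximum size of a bond. A path-decomposition of $G$ is a sequence $(X_0,\dots,X_s)$ of subsets of $V(G)$ such that for each vertex $x$ the indices $i$ with $x\in X_i$ form a non-empty interval, and each edge has both ends in some $X_i$; its width is $\max_i|X_i|-1$, and the pathwidth is the minimum width of a path-decomposition. *)

From mathcomp Require Import all_boot.
Set Implicit Arguments. Unset Strict Implicit. Unset Printing Implicit Defensive.

Section Graphs.
Variable T : finType.
Implicit Types (e : rel T) (S : {set T}).

Definition simple_graph e : Prop := symmetric e /\ irreflexive e.

Definition edges e : {set {set T}} := [set [set x; y] | x in T, y in T & e x y].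

Definition ncomp e : nat := n_comp e predT.

Definition del_edges e (F : {set {set T}}) : rel T :=
  fun x y => e x y && ([set x; y] \notin F).

Definition bond e (F : {set {set T}}) : bool :=
  minset (fun F : {set {set T}} =>
            (F \subset edges e) && (ncomp e < ncomp (del_edges e F))) F.

(* Cocircumference: the maximum size of a bond (0 if there is none). *)
Definition cocircumference e : nat := \max_(F : {set {set T}} | bond e F) #|F|.

Definition connected_on e S : Prop :=
  forall x y, x \in S -> y \in S ->
    connect [rel u v | [&& e u v, u \in S & v \in S]] x y.

(* 2-connected: more than 2 vertices and G - X connected for every |X| < 2. *)
Definition two_connected e : Prop :=
  2 < #|T| /\ connected_on e [set: T] /\ forall v : T, connected_on e [set~ v].

Definition path_decomposition e (s : seq {set T}) : Prop :=
  [/\ 0 < size s,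
      (forall x : T, exists2 i, i < size s & x \in nth set0 s i),
      (forall (x : T) (i j l : nat), i <= l -> l <= j -> j < size s ->
          x \in nth set0 s i -> x \in nth set0 s j -> x \in nth set0 s l) &
      (forall x y : T, e x y -> exists2 i, i < size s &
          (x \in nth set0 s i) && (y \in nth set0 s i))].

Definition pd_width (s : seq {set T}) : nat := (\max_(X <- s) #|X|).-1.

(* pathwidth >= k : every path-decomposition has width at least k
   (the pathwidth is the minimum width of a path-decomposition). *)
Definition pathwidth_at_least e (k : nat) : Prop :=
  forall s : seq {set T}, path_decomposition e s -> k <= pd_width s.

End Graphs.

(* The graph G_K lives on the vertices 0, ..., 2 * 3^K - 1 and is defined by
   recursive blocks: a block of level 0 is an edge, and a block of level
   j + 1 consists of three consecutive blocks of level j, joined by the two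
   edges between them, plus the chord between its first and last vertex.
   Thus G_K is the Hamiltonian path 0 - 1 - ... - (n - 1) together with the
   chords of all blocks, and no two edges cross.

   - 2-connectivity: deleting a vertex leaves two segments of the path, which
     are joined by the chord between the ends.
   - Pathwidth: every path-decomposition has a bag containing j + 2 vertices
     of each block of level j (induction, using that the union of any two of
     the three sub-blocks is connected), so its width is at least K + 1.
   - Cocircumference: in a connected graph a bond is the cut between two
     connected sides A and ~: A.  Since edges do not cross, two disjoint
     connected sets never interleave along the path, so the path switches
     sides at most twice.  Each cut edge other than the end chord straddles
     a switch, and at most K such edges straddle a given position (one per
     level); if the end chord is cut there is only one switch. *)
From mathcomp Require Import all_boot zify.
Set Implicit Arguments. Unset Strict Implicit. Unset Printing Implicit Defensive.

Section Connectivity.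
Variable T : finType.
Implicit Types (r : rel T) (L : {set T}).

Lemma ncomp_gt1 r : symmetric r -> (1 < ncomp r) <-> exists x y, ~~ connect r x y.
Proof.
move=> sr; have cs := sym_connect_sym sr; rewrite /ncomp; split.
  case/card_gt1P => x [y [hx hy hxy]]; exists x, y; apply/negP => cxy.
  move: hx hy; rewrite !inE /= !andbT /roots => /eqP hx /eqP hy.
  by move/(rootP cs): cxy; rewrite hx hy => exy; rewrite exy eqxx in hxy.
case=> x [y nc]; apply/card_gt1P; exists (root r x), (root r y).
rewrite !inE /= !andbT !(roots_root cs); split => //.
by rewrite (root_connect cs).
Qed.

Lemma ncomp_connected r (x0 : T) : symmetric r -> (forall x y, connect r x y) ->
  ncomp r = 1.
Proof.
move=> sr conn; apply/eqP; rewrite eqn_leq; apply/andP; split.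
  by rewrite leqNgt; apply/negP => /(ncomp_gt1 sr)[x [y]]; rewrite conn.
by apply/card_gt0P; exists (root r x0); rewrite !inE /= andbT (roots_root (sym_connect_sym sr)).
Qed.

Lemma connect_exit r L x y : symmetric r -> connect r x y ->
  x \in L -> y \notin L -> exists a b, [/\ r a b, a \in L & b \notin L].
Proof.
move=> sr cxy xL yL.
case: (boolP [exists a, exists b, [&& r a b, a \in L & b \notin L]]).
  by case/existsP => a /existsP[b /and3P[]]; exists a, b.
move=> noexit; have clL : closed r L.
  apply: intro_closed; first exact: sym_connect_sym.
  move=> a b rab aL; apply/negPn/negP => bL; move/negP: noexit; apply.
  by apply/existsP; exists a; apply/existsP; exists b; rewrite rab aL.
by move: (closed_connect clL cxy); rewrite xL (negbTE yL).
Qed.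

(* A walk starting in a set S closed under r stays in S, so it is also a walk
   of any relation r' that contains r on S. *)
Lemma connect_within (r r' : rel T) (S : {set T}) a b :
  (forall u v, r u v -> u \in S -> v \in S -> r' u v) ->
  (forall u v, r u v -> u \in S -> v \in S) ->
  a \in S -> connect r a b -> connect r' a b.
Proof.
move=> sub cl aS /connectP[p pth ->]; elim: p a aS pth => //= c p IH a aS /andP[rac pth].
have cS := cl _ _ rac aS.
exact: connect_trans (connect1 (sub _ _ rac aS cS)) (IH c cS pth).
Qed.

End Connectivity.

Section Induced.
Variables (T : finType) (e : rel T).
Hypothesis e_sym : symmetric e.
Implicit Types S : {set T}.

Definition induced S : rel T := [rel u v | [&& e u v, u \in S & v \in S]].
Arguments induced S _ _ /.

Lemma induced_sym S : symmetric (induced S).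
Proof. by move=> u v; rewrite /= e_sym [(u \in S) && _]andbC. Qed.

Lemma induced_csym S : connect_sym (induced S).
Proof. exact/sym_connect_sym/induced_sym. Qed.

Lemma connect_induced_sub S S' x y :
  S \subset S' -> connect (induced S) x y -> connect (induced S') x y.
Proof.
move=> sub; apply: connect_sub => u v /= /and3P[h hu hv]; apply: connect1.
by rewrite /= h !(subsetP sub).
Qed.

Lemma connected_on_setT : connected_on e [set: T] -> forall x y, connect e x y.
Proof.
move=> conn x y; apply: connect_sub (conn x y (in_setT x) (in_setT y)) => u v.
by case/and3P => euv _ _; apply: connect1.
Qed.

Lemma connected_onU S1 S2 p q :
  connected_on e S1 -> connected_on e S2 -> p \in S1 -> q \in S2 -> e p q ->
  connected_on e (S1 :|: S2).
Proof.
move=> c1 c2 hp hq hpq.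
have s1 : S1 \subset S1 :|: S2 by apply: subsetUl.
have s2 : S2 \subset S1 :|: S2 by apply: subsetUr.
have cross x y : x \in S1 -> y \in S2 -> connect (induced (S1 :|: S2)) x y.
  move=> hx hy; apply: connect_trans (connect_induced_sub s1 (c1 _ _ hx hp)) _.
  apply: connect_trans (connect_induced_sub s2 (c2 _ _ hq hy)).
  by apply: connect1; rewrite /= hpq !inE hp hq orbT.
move=> x y; rewrite !inE => /orP[hx|hx] /orP[hy|hy].
- exact: connect_induced_sub s1 (c1 _ _ hx hy).
- exact: cross.
- by rewrite induced_csym; apply: cross.
- exact: connect_induced_sub s2 (c2 _ _ hx hy).
Qed.

End Induced.
Arguments induced {T} e S _ _ /.

Section Bonds.
Variables (T : finType) (e : rel T).
Hypothesis e_sym : symmetric e.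
Hypothesis e_conn : forall x y, connect e x y.
Implicit Types (A : {set T}) (F : {set {set T}}).

Definition delta A : {set {set T}} :=
  [set [set x; y] | x in A, y in ~: A & e x y].

Lemma mem_delta A x y : e x y -> ([set x; y] \in delta A) = ((x \in A) != (y \in A)).
Proof.
move=> exy; apply/imset2P/idP.
  case=> a b aA; rewrite !inE => /andP[bA eab] eq.
  have ha : a \in [set x; y] by rewrite eq !inE eqxx.
  have hb : b \in [set x; y] by rewrite eq !inE eqxx orbT.
  move: ha hb; rewrite !inE => /orP[]/eqP<- /orP[]/eqP hb; subst;
    rewrite ?aA ?(negbTE bA) //; by move: bA; rewrite aA.
case: (boolP (x \in A)) => xA /= yA.
  by apply: (Imset2spec (x1 := x) (x2 := y)); rewrite // !inE yA exy.
apply: (Imset2spec (x1 := y) (x2 := x)).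
- by move: yA; case: (y \in A).
- by rewrite !inE xA e_sym.
- by rewrite setUC.
Qed.

Lemma delta_sub_edges A : delta A \subset edges e.
Proof.
apply/subsetP => z /imset2P[a b _]; rewrite !inE => /andP[_ eab] ->.
by apply/imset2P; apply: (Imset2spec (x1 := a) (x2 := b)); rewrite ?inE.
Qed.

Lemma del_edges_sym F : symmetric (del_edges e F).
Proof. by move=> x y; rewrite /del_edges e_sym setUC. Qed.

Lemma delta_disconnects A x y : x \in A -> y \notin A ->
  (delta A \subset edges e) && (ncomp e < ncomp (del_edges e (delta A))).
Proof.
move=> xA yA; rewrite delta_sub_edges (ncomp_connected x e_sym e_conn) /=.
apply/(ncomp_gt1 (del_edges_sym _)); exists x, y; apply/negP => cxy.
have clA : closed (del_edges e (delta A)) A.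
  apply: intro_closed; first exact/sym_connect_sym/del_edges_sym.
  move=> u v /andP[euv nd] uA; apply/negPn/negP => vA; move: nd.
  by rewrite mem_delta // uA vA.
by move: (closed_connect clA cxy); rewrite xA (negbTE yA).
Qed.

Definition component F x : {set T} := [set z | connect (del_edges e F) x z].

Lemma component_sym F x z : (z \in component F x) = (x \in component F z).
Proof. by rewrite !inE (sym_connect_sym (del_edges_sym F)). Qed.

Lemma component_refl F x : x \in component F x.
Proof. by rewrite inE connect0. Qed.

Lemma component_closed F x : closed (del_edges e F) (component F x).
Proof.
apply: intro_closed; first exact/sym_connect_sym/del_edges_sym.
move=> u v ruv; rewrite !inE => cu; exact: connect_trans cu (connect1 ruv).
Qed.

Lemma component_disjoint F x y : y \notin component F x ->
  [disjoint component F x & component F y].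
Proof.
move=> yx; rewrite -setI_eq0; apply/eqP/setP => z; rewrite !inE.
apply/negP => /andP[xz yz]; move: yx; rewrite inE (connect_trans xz) //.
by rewrite (sym_connect_sym (del_edges_sym F)).
Qed.

Lemma delta_component_sub F x : delta (component F x) \subset F.
Proof.
apply/subsetP => z /imset2P[a b aC]; rewrite !inE => /andP[bC eab] ->.
apply/negPn/negP => nF.
have h : del_edges e F a b by rewrite /del_edges eab nF.
by move: bC (@component_closed F x a b h); rewrite aC !inE => /negbTE ->.
Qed.

Lemma component_connected F x : connected_on e (component F x).
Proof.
move=> u v uC vC.
have cuv : connect (del_edges e F) u v.
  by rewrite component_sym !inE in uC; move: vC; rewrite inE; apply: connect_trans.
apply: (connect_within _ _ uC cuv).
  by move=> a b /andP[eab _] aC bC; rewrite /= eab aC bC.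
by move=> a b hab aC; rewrite -(@component_closed F x a b hab).
Qed.

(* An edge cannot lie in the cuts of three pairwise disjoint sets: each of
   them would have to contain one of its two ends. *)
Lemma delta_three_disjoint A1 A2 A3 a b : e a b ->
  [disjoint A1 & A2] -> [disjoint A1 & A3] -> [disjoint A2 & A3] ->
  [set a; b] \in delta A1 -> [set a; b] \in delta A2 -> [set a; b] \in delta A3 -> False.
Proof.
move=> eab d12 d13 d23; rewrite !mem_delta //.
have nd (B C : {set T}) z : [disjoint B & C] -> ~~ ((z \in B) && (z \in C)).
  by move=> dBC; apply/negP => /andP[zB zC]; rewrite (disjointFr dBC zB) in zC.
move: (nd _ _ a d12) (nd _ _ b d12) (nd _ _ a d13) (nd _ _ b d13) (nd _ _ a d23) (nd _ _ b d23).
by case: (a \in A1); case: (b \in A1); case: (a \in A2); case: (b \in A2);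
  case: (a \in A3); case: (b \in A3).
Qed.

Section OneBond.
Variable F : {set {set T}}.
Hypothesis bF : bond e F.

(* By minimality, a component of G - F missing some vertex has cut exactly F. *)
Lemma bond_component x y : y \notin component F x -> delta (component F x) = F.
Proof.
move=> yC; apply: minsetinf bF _ (delta_component_sub F x).
exact: delta_disconnects (component_refl F x) yC.
Qed.

Lemma bond_disconnects : exists x y, y \notin component F x.
Proof.
have /andP[_ hlt] := minsetp bF.
have [x0 _] : exists x0 : T, true.
  have : 0 < ncomp (del_edges e F) by apply: leq_ltn_trans hlt.
  by case/card_gt0P => z _; exists z.
rewrite (ncomp_connected x0 e_sym e_conn) in hlt.
by case/(ncomp_gt1 (del_edges_sym F)): hlt => x [y nxy]; exists x, y; rewrite inE.
Qed.

(* The complement of a side of the bond is connected: otherwise G - F would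
   have three components, each with cut F. *)
Lemma bond_complement_connected x y : y \notin component F x ->
  connected_on e (~: component F x).
Proof.
move=> yC u v uC vC.
have clC a b : del_edges e F a b -> a \in ~: component F x -> b \in ~: component F x.
  by move=> hab; rewrite !in_setC (@component_closed F x a b hab).
case: (boolP (connect (del_edges e F) u v)) => cuv.
  apply: (connect_within _ clC uC cuv).
  by move=> a b /andP[eab _] aC bC; rewrite /= eab aC bC.
have vu : v \notin component F u by rewrite inE.
rewrite !inE in uC vC.
have xu : x \notin component F u by rewrite component_sym inE.
have xv : x \notin component F v by rewrite component_sym inE.
have [a [b [eab au bu]]] := connect_exit e_sym (e_conn u x) (component_refl F u) xu.
have abF : [set a; b] \in F by rewrite -(bond_component xu) mem_delta // au bu.
exfalso; apply: (delta_three_disjoint eab (component_disjoint vu)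
                   (component_disjoint xu) (component_disjoint xv)).
- by rewrite mem_delta // au bu.
- by rewrite (bond_component xv).
- by rewrite (bond_component yC).
Qed.

End OneBond.

Lemma bond_delta F : bond e F ->
  exists A, [/\ F = delta A, connected_on e A & connected_on e (~: A)].
Proof.
move=> bF; have [x [y yC]] := bond_disconnects bF.
exists (component F x); split.
- by rewrite (bond_component bF yC).
- exact: component_connected.
- exact: (bond_complement_connected bF yC).
Qed.

End Bonds.

Section PathDecompositions.
Variables (T : finType) (e : rel T).
Hypothesis e_sym : symmetric e.
Implicit Types (X Z W : {set T}) (s : seq {set T}).

(* A connected set meeting bags i1 <= i3 meets every bag in between: otherwise
   the vertices of Z occurring before bag l would be closed under edges. *)
Lemma connected_meets_bags Z s z1 z3 i1 i3 l :
  connected_on e Z -> path_decomposition e s ->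
  z1 \in Z -> z1 \in nth set0 s i1 -> z3 \in Z -> z3 \in nth set0 s i3 ->
  i1 <= l -> l <= i3 -> i3 < size s ->
  exists2 z, z \in Z & z \in nth set0 s l.
Proof.
move=> cZ [_ _ hint hedge] z1Z z1b z3Z z3b h1 h2 h3.
case: (boolP [exists z, (z \in Z) && (z \in nth set0 s l)]) => [/existsP[z /andP[]]|H].
  by exists z.
have nZ z : z \in Z -> z \in nth set0 s l -> False.
  by move=> hz hzl; move/existsP: H; apply; exists z; rewrite hz hzl.
pose L := [set x : T | [exists i : 'I_l, x \in nth set0 s i]].
have clL : closed (induced e Z) L.
  apply: intro_closed; first exact: induced_csym.
  move=> x y /and3P[exy xZ yZ]; rewrite !inE => /existsP[i xi].
  have [j js /andP[xj yj]] := hedge _ _ exy.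
  case: (ltnP j l) => hj; first by apply/existsP; exists (Ordinal hj).
  exfalso; apply: (nZ x xZ); apply: (hint x i j l) => //; exact: ltnW.
have := closed_connect clL (cZ _ _ z1Z z3Z).
rewrite !inE; case: (ltnP i1 l) => hl.
  have -> : [exists i : 'I_l, z1 \in nth set0 s i] by apply/existsP; exists (Ordinal hl).
  move=> /esym/existsP[i zi]; exfalso; apply: (nZ z3 z3Z); apply: (hint z3 i i3 l) => //.
  exact: ltnW.
have eq_l : l = i1 by lia.
by move=> _; exfalso; apply: (nZ z1 z1Z); rewrite eq_l.
Qed.

Definition weight W p := forall s, path_decomposition e s ->
  exists2 i, i < size s & p <= #|W :&: nth set0 s i|.

Lemma middle_bag_gains X Z W s p ia ib ic xa xc :
  connected_on e Z -> path_decomposition e s -> [disjoint Z & X] ->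
  X :|: Z \subset W ->
  xa \in Z -> xa \in nth set0 s ia -> xc \in Z -> xc \in nth set0 s ic ->
  (ia <= ib <= ic) || (ic <= ib <= ia) -> ia < size s -> ic < size s ->
  p <= #|X :&: nth set0 s ib| -> p.+1 <= #|W :&: nth set0 s ib|.
Proof.
move=> cZ pd dZ sW xaZ xab xcZ xcb order ha hc hp.
have [z zZ zb] : exists2 z, z \in Z & z \in nth set0 s ib.
  case/orP: order => /andP[o1 o2].
  - exact: (connected_meets_bags cZ pd xaZ xab xcZ xcb o1 o2 hc).
  - exact: (connected_meets_bags cZ pd xcZ xcb xaZ xab o1 o2 ha).
have zX : z \notin X by rewrite (disjointFr dZ zZ).
have : z |: (X :&: nth set0 s ib) \subset W :&: nth set0 s ib.
  apply/subsetP => y; rewrite !inE => /orP[/eqP->|/andP[yX yb]].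
    by rewrite zb (subsetP sW) // inE zZ orbT.
  by rewrite yb (subsetP sW) // inE yX.
move/subset_leq_card; rewrite cardsU1 inE (negbTE zX) /=.
by apply: leq_trans; rewrite add1n ltnS.
Qed.

(* Three disjoint sets of weight p > 0, any two of which have a connected
   union, have a union of weight p + 1: the middle of the three heavy bags
   gains a vertex from the union of the two outer sets. *)
Lemma weight_triple X1 X2 X3 p : 0 < p ->
  weight X1 p -> weight X2 p -> weight X3 p ->
  [disjoint X1 & X2] -> [disjoint X1 & X3] -> [disjoint X2 & X3] ->
  connected_on e (X2 :|: X3) -> connected_on e (X1 :|: X3) -> connected_on e (X1 :|: X2) ->
  weight (X1 :|: X2 :|: X3) p.+1.
Proof.
move=> p0 w1 w2 w3 d12 d13 d23 c23 c13 c12 s pd.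
set W := X1 :|: X2 :|: X3.
have pick X i : p <= #|X :&: nth set0 s i| -> exists2 x, x \in X & x \in nth set0 s i.
  move=> hq; have := leq_trans p0 hq.
  by case/card_gt0P => x; rewrite inE => /andP[]; exists x.
have [i1 h1 q1] := w1 s pd; have [i2 h2 q2] := w2 s pd; have [i3 h3 q3] := w3 s pd.
have [x1 x1X x1b] := pick _ _ q1; have [x2 x2X x2b] := pick _ _ q2.
have [x3 x3X x3b] := pick _ _ q3.
have inU (A B : {set T}) x : x \in A -> (x \in A :|: B) * (x \in B :|: A).
  by move=> xA; rewrite !inE xA orbT.
have subW (A B C : {set T}) : A :|: B :|: C = W -> A :|: (B :|: C) \subset W.
  by move=> <-; rewrite setUA.
have disjU (A B C : {set T}) : [disjoint A & C] -> [disjoint B & C] -> [disjoint A :|: B & C].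
  by rewrite -!setI_eq0 setIUl setU_eq0 => -> ->.
have /or3P[o2|o1|o3] : [|| (i1 <= i2 <= i3) || (i3 <= i2 <= i1),
                     (i2 <= i1 <= i3) || (i3 <= i1 <= i2) |
                     (i1 <= i3 <= i2) || (i2 <= i3 <= i1)] by lia.
- exists i2 => //.
  apply: (middle_bag_gains c13 pd _ _ (inU _ _ _ x1X).1 x1b
            (inU _ _ _ x3X).2 x3b o2 h1 h3 q2).
  + by apply: disjU => //; rewrite disjoint_sym.
  + by apply: subW; rewrite [X2 :|: X1]setUC.
- exists i1 => //.
  apply: (middle_bag_gains c23 pd _ _ (inU _ _ _ x2X).1 x2b
            (inU _ _ _ x3X).2 x3b o1 h2 h3 q1).
  + by apply: disjU; rewrite disjoint_sym.
  + exact: subW.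
- exists i3 => //.
  apply: (middle_bag_gains c12 pd _ _ (inU _ _ _ x1X).1 x1b
            (inU _ _ _ x2X).2 x2b o3 h1 h2 q3).
  + exact: disjU.
  + by apply: subW; rewrite /W [RHS]setUC setUA.
Qed.



End PathDecompositions.

Definition bsize j := 2 * 3 ^ j.
Arguments bsize : simpl never.

Lemma bsizeS j : bsize j.+1 = bsize j + bsize j + bsize j.
Proof. rewrite /bsize expnS; lia. Qed.

Lemma bsize_ge2 j : 2 <= bsize j.
Proof. rewrite /bsize; have := expn_gt0 3 j; lia. Qed.

Lemma bsize0 : bsize 0 = 2. Proof. by []. Qed.

(* bedge j o u v: uv (with u < v) is an edge of the block of level j occupying
   [o, o + bsize j): a level-0 block is an edge, and a level-(j+1) block
   consists of three consecutive blocks of level j, the two edges joining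
   them, and the chord between its first and last vertex. *)
Fixpoint bedge j o u v : bool :=
  match j with
  | 0 => (u == o) && (v == o.+1)
  | j'.+1 =>
     [|| bedge j' o u v, bedge j' (o + bsize j') u v,
         bedge j' (o + bsize j' + bsize j') u v,
         (u == o + bsize j' - 1) && (v == o + bsize j'),
         (u == o + bsize j' + bsize j' - 1) && (v == o + bsize j' + bsize j')
       | (u == o) && (v == o + bsize j'.+1 - 1)]
  end.

Inductive bedge_spec j o u v : Prop :=
 | BEdgeFirst of bedge j o u v
 | BEdgeSecond of bedge j (o + bsize j) u v
 | BEdgeThird of bedge j (o + bsize j + bsize j) u v
 | BEdgeJoin1 of u = o + bsize j - 1 & v = o + bsize j
 | BEdgeJoin2 of u = o + bsize j + bsize j - 1 & v = o + bsize j + bsize j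
 | BEdgeChord of u = o & v = o + bsize j.+1 - 1.

Lemma bedgeP j o u v : bedge j.+1 o u v -> bedge_spec j o u v.
Proof.
rewrite /=; case/or3P => [?|?|/orP[?|/orP[/andP[/eqP ? /eqP ?]|/orP[/andP[/eqP ? /eqP ?]|/andP[/eqP ? /eqP ?]]]]].
- exact: BEdgeFirst.
- exact: BEdgeSecond.
- exact: BEdgeThird.
- exact: BEdgeJoin1.
- exact: BEdgeJoin2.
- exact: BEdgeChord.
Qed.

Lemma bedge0P o u v : bedge 0 o u v -> u = o /\ v = o.+1.
Proof. by move=> /andP[/eqP -> /eqP ->]. Qed.

Lemma bedge_range j o u v : bedge j o u v -> [/\ o <= u, u < v & v < o + bsize j].
Proof.
elim: j o => [|j IH] o.
  by move=> /bedge0P [-> ->]; rewrite bsize0; split; lia.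
have := bsize_ge2 j; rewrite bsizeS => h2.
by case/bedgeP => [/IH[]|/IH[]|/IH[]|-> ->|-> ->|-> ->]; rewrite ?bsizeS; split; lia.
Qed.

Lemma bedge_succ j o x : o <= x -> x.+1 < o + bsize j -> bedge j o x x.+1.
Proof.
elim: j o => [|j IH] o /=.
  rewrite bsize0 => h1 h2; have -> : x = o by lia.
  by rewrite !eqxx.
have := bsize_ge2 j; rewrite bsizeS => h2 h3 h4.
case: (ltnP x.+1 (o + bsize j)) => h5; first by rewrite IH.
case: (eqVneq x.+1 (o + bsize j)) => h6.
  by rewrite (_ : x == o + bsize j - 1) ?h6 ?eqxx ?orbT //; apply/eqP; lia.
case: (ltnP x.+1 (o + bsize j + bsize j)) => h7.
  by rewrite (IH (o + bsize j)) ?orbT //; lia.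
case: (eqVneq x.+1 (o + bsize j + bsize j)) => h8.
  by rewrite (_ : x == o + bsize j + bsize j - 1) ?h8 ?eqxx ?orbT //; apply/eqP; lia.
by rewrite (IH (o + bsize j + bsize j)) ?orbT //; lia.
Qed.

Lemma bedge_chord j o : bedge j o o (o + bsize j - 1).
Proof.
case: j => [|j] /=; first by rewrite bsize0 eqxx /=; apply/eqP; lia.
by rewrite !eqxx !orbT.
Qed.

Lemma bedge_noncrossing j o x y u v :
  bedge j o x y -> bedge j o u v -> x < u -> u < y -> y < v -> False.
Proof.
elim: j o x y u v => [|j IH] o x y u v.
  by move=> /bedge0P[-> ->] /bedge0P[-> ->]; lia.
have := bsize_ge2 j => h2; have hS := bsizeS j.
have R := @bedge_range j.
move=> H1 H2; move: H1 H2 (IH o x y u v) (IH (o + bsize j) x y u v)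
                   (IH (o + bsize j + bsize j) x y u v).
case/bedgeP => [/[dup] ? /R[? ? ?]|/[dup] ? /R[? ? ?]|/[dup] ? /R[? ? ?]|-> ->|-> ->|-> ->];
  case/bedgeP => [/[dup] ? /R[? ? ?]|/[dup] ? /R[? ? ?]|/[dup] ? /R[? ? ?]|-> ->|-> ->|-> ->];
  intros; try lia; eauto.
Qed.

(* straddle j o c lists the edges uv of the block that may straddle position c
   (u < c <= v): at most one per level. *)
Fixpoint straddle j o c : seq (nat * nat) :=
  if o < c < o + bsize j then (o, o + bsize j - 1) ::
    match j with
    | 0 => [::]
    | j'.+1 =>
      (if c == o + bsize j' then [:: (o + bsize j' - 1, o + bsize j')] else [::]) ++
      (if c == o + bsize j' + bsize j'
       then [:: (o + bsize j' + bsize j' - 1, o + bsize j' + bsize j')] else [::]) ++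
      straddle j' o c ++ straddle j' (o + bsize j') c ++ straddle j' (o + bsize j' + bsize j') c
    end
  else [::].

Lemma straddle_nil j o c : ~~ (o < c < o + bsize j) -> straddle j o c = [::].
Proof. by case: j => [|j] /= /negbTE ->. Qed.

Lemma straddle_head j o c : o < c < o + bsize j ->
  straddle j o c = (o, o + bsize j - 1) :: behead (straddle j o c).
Proof. by case: j => [|j] h /=; rewrite h. Qed.

(* Position c lies strictly inside at most one of the three sub-blocks. *)
Lemma size_straddle j o c : size (straddle j o c) <= j.+1.
Proof.
elim: j o => [|j IH] o /=; first by case: ifP.
case: ifP => // hin /=.
have := bsize_ge2 j => h2; have hS := bsizeS j.
rewrite !size_cat.
have I1 := IH o; have I2 := IH (o + bsize j); have I3 := IH (o + bsize j + bsize j).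
have N o' : ~~ (o' < c < o' + bsize j) -> size (straddle j o' c) = 0.
  by move/straddle_nil ->.
case: (boolP (o < c < o + bsize j)) => [?|/N ?];
case: (boolP (o + bsize j < c < o + bsize j + bsize j)) => [?|/N ?];
case: (boolP (o + bsize j + bsize j < c < o + bsize j + bsize j + bsize j)) => [?|/N ?];
case: eqP => ?; case: eqP => ? /=; lia.
Qed.

Lemma mem_straddle j o c u v : bedge j o u v -> u < c <= v -> (u, v) \in straddle j o c.
Proof.
elim: j o => [|j IH] o.
  move=> /bedge0P[-> ->] h /=; rewrite bsize0 ifT; last lia.
  have -> : o + 2 - 1 = o.+1 by lia.
  by rewrite inE.
move=> HE h; have [r1 r2 r3] := bedge_range HE.
have := bsize_ge2 j => h2; have hS := bsizeS j.
rewrite /= ifT; last lia.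
move: HE h; case/bedgeP => [H h|H h|H h|-> -> h|-> -> h|-> -> h].
- by rewrite inE !mem_cat (IH o) ?orbT.
- by rewrite inE !mem_cat (IH (o + bsize j)) ?orbT.
- by rewrite inE !mem_cat (IH (o + bsize j + bsize j)) ?orbT.
- have -> : c = o + bsize j by lia.
  by rewrite eqxx inE mem_cat inE eqxx orbT.
- have -> : c = o + bsize j + bsize j by lia.
  by rewrite eqxx inE !mem_cat inE eqxx !orbT.
- by rewrite inE eqxx.
Qed.

Section NestedGraph.
Variable K : nat.
Notation V := ('I_(bsize K)).

Definition nested : rel V := fun x y => bedge K 0 x y || bedge K 0 y x.

Lemma nested_sym : symmetric nested.
Proof. by move=> x y; rewrite /nested orbC. Qed.

Lemma nested_irr : irreflexive nested.
Proof. by move=> x; rewrite /nested orbb; apply/negP => /bedge_range[]; lia. Qed.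

Lemma nested_simple : simple_graph nested.
Proof. by split; [exact: nested_sym | exact: nested_irr]. Qed.

Lemma nested_lt (x y : V) : nested x y -> x < y -> bedge K 0 x y.
Proof. by case/orP => // /bedge_range[]; lia. Qed.

Lemma nested_succ (x y : V) : y = x.+1 :> nat -> nested x y.
Proof. by move=> hy; rewrite /nested hy bedge_succ // -hy add0n. Qed.

Lemma nested_chord (p q : V) : val p = 0 -> val q = (bsize K).-1 -> nested p q.
Proof.
move=> hp hq; apply/orP; left; rewrite hp hq.
have -> : (bsize K).-1 = 0 + bsize K - 1 by lia.
exact: bedge_chord.
Qed.

Definition segment lo hi : {set V} := [set x : V | lo <= x < hi].

(* Segments are connected, along the Hamiltonian path. *)
Lemma segment_connected lo hi : connected_on nested (segment lo hi).
Proof.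
have step (x y : V) : x <= y -> x \in segment lo hi -> y \in segment lo hi ->
    connect (induced nested (segment lo hi)) x y.
  move: {2}(y - x) (erefl (y - x)) => d; elim: d y => [|d IH] y hd hxy hx hy.
    by have -> : y = x by apply: val_inj => /=; lia.
  have hy1 : y.-1 < bsize K by have := ltn_ord y; lia.
  pose y' := Ordinal hy1.
  have hy' : y' \in segment lo hi by move: hx hy; rewrite !inE /=; lia.
  apply: connect_trans (IH y' _ _ hx hy') _; rewrite /=; try lia.
  by apply: connect1; rewrite /= hy' hy andbT nested_succ //=; lia.
move=> x y hx hy; case: (leqP x y) => h; first exact: step.
by rewrite (induced_csym nested_sym); apply: step => //; lia.
Qed.

(* Removing a vertex v leaves the two segments before and after v, which
   are joined by the chord between the ends unless one of them is empty. *)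
Lemma setC1_segments (v : V) : [set~ v] = segment 0 v :|: segment v.+1 (bsize K).
Proof.
apply/setP => x; rewrite !inE ltn_ord andbT /=.
have -> : (x != v) = ((x : nat) != v) by [].
by case: ltngtP.
Qed.

Lemma setC1_connected (v : V) : 1 < bsize K -> connected_on nested [set~ v].
Proof.
move=> n2; rewrite setC1_segments.
case: (posnP v) => [v0|v_gt0].
  have -> : segment 0 v = set0 by apply/setP => x; rewrite !inE v0; lia.
  by rewrite set0U; apply: segment_connected.
case: (ltnP v.+1 (bsize K)) => v_end; last first.
  have -> : segment v.+1 (bsize K) = set0.
    by apply/setP => x; rewrite !inE; have := ltn_ord x; lia.
  by rewrite setU0; apply: segment_connected.
have h0 : 0 < bsize K by lia.
have h1 : (bsize K).-1 < bsize K by lia.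
apply: (@connected_onU _ nested nested_sym _ _ (Ordinal h0) (Ordinal h1)); rewrite ?inE /=;
  try exact: segment_connected; try lia.
exact: nested_chord.
Qed.

Lemma nested_2connected : 1 <= K -> two_connected nested.
Proof.
move=> K1; have n6 : 6 <= bsize K.
  by case: K K1 => // j _; rewrite bsizeS; have := bsize_ge2 j; lia.
split; first by rewrite card_ord; lia.
split; last by move=> v; apply: setC1_connected; lia.
have -> : [set: V] = segment 0 (bsize K) by apply/setP => x; rewrite !inE ltn_ord.
exact: segment_connected.
Qed.

End NestedGraph.
Arguments nested : clear implicits.
Arguments segment : clear implicits.

(* Pathwidth: the block of level j has weight j + 2. *)
Section Pathwidth.
Variable K : nat.
Notation V := ('I_(bsize K)).

(* The blocks of the recursive construction of G_K, as (level, offset). *)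
Inductive block : nat -> nat -> Prop :=
 | block_top : block K 0
 | block_first j o : block j.+1 o -> block j o
 | block_second j o : block j.+1 o -> block j (o + bsize j)
 | block_third j o : block j.+1 o -> block j (o + bsize j + bsize j).

Lemma block_edge j o u v : block j o -> bedge j o u v -> bedge K 0 u v.
Proof.
move=> B; elim: B u v => {j o} [//|j o _ IH|j o _ IH|j o _ IH] u v H; apply: IH => /=;
  by rewrite H ?orbT.
Qed.

Lemma block_range j o : block j o -> o + bsize j <= bsize K.
Proof. by elim => {j o} [|j o _|j o _|j o _]; rewrite ?bsizeS; lia. Qed.

Lemma segmentU lo mid hi : lo <= mid <= hi ->
  segment K lo mid :|: segment K mid hi = segment K lo hi.
Proof. by move=> h; apply/setP => x; rewrite !inE; lia. Qed.

Lemma segment_disjoint a b c d : b <= c -> [disjoint segment K a b & segment K c d].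
Proof. by move=> h; rewrite -setI_eq0; apply/eqP/setP => x; rewrite !inE; lia. Qed.

(* The first and last sub-blocks of a block are joined by its chord. *)
Lemma outer_subblocks_connected j o : block j.+1 o ->
  connected_on (nested K)
    (segment K o (o + bsize j) :|:
     segment K (o + bsize j + bsize j) (o + bsize j + bsize j + bsize j)).
Proof.
move=> B; have hr := block_range B; have hS := bsizeS j; have h2 := bsize_ge2 j.
have ho : o < bsize K by lia.
have hc : o + bsize j.+1 - 1 < bsize K by lia.
apply: (@connected_onU _ _ (@nested_sym K) _ _ (Ordinal ho) (Ordinal hc));
  rewrite ?inE /=; try exact: segment_connected; try lia.
by apply/orP; left; apply: (block_edge B); apply: bedge_chord.
Qed.

(* Every path-decomposition has a bag containing j + 2 vertices of a block of
   level j: an edge for j = 0, and weight_triple on the sub-blocks otherwise. *)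
Lemma weight_block j o : block j o -> weight (nested K) (segment K o (o + bsize j)) j.+2.
Proof.
elim: j o => [|j IH] o B.
  have hr := block_range B; rewrite bsize0 in hr.
  have ha : o < bsize K by lia.
  have hb : o.+1 < bsize K by lia.
  have eab : nested K (Ordinal ha) (Ordinal hb).
    by apply/orP; left; apply: (block_edge B) => /=; rewrite !eqxx.
  move=> s [_ _ _ hedge]; have [i hi /andP[ai bi]] := hedge _ _ eab.
  exists i => //.
  have : [set Ordinal ha; Ordinal hb] \subset segment K o (o + bsize 0) :&: nth set0 s i.
    apply/subsetP => x; rewrite !inE => /orP[/eqP->|/eqP->];
      rewrite ?ai ?bi /= bsize0 andbT; lia.
  by move/subset_leq_card; rewrite cards2; case: eqP => // [[]]; lia.
have hS := bsizeS j; have h2 := bsize_ge2 j.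
have -> : segment K o (o + bsize j.+1) = segment K o (o + bsize j) :|:
    segment K (o + bsize j) (o + bsize j + bsize j) :|:
    segment K (o + bsize j + bsize j) (o + bsize j + bsize j + bsize j).
  by apply/setP => x; rewrite !inE hS; lia.
apply: (weight_triple (@nested_sym K) _ (IH _ (block_first B))
          (IH _ (block_second B)) (IH _ (block_third B)));
  rewrite ?segmentU; try exact: segment_connected; try (apply: segment_disjoint); try lia.
exact: outer_subblocks_connected.
Qed.

Lemma nested_pathwidth : pathwidth_at_least (nested K) K.+1.
Proof.
move=> s pd; have [i hi heavy] := weight_block block_top pd.
have bag_le_max : #|nth set0 s i| <= \max_(X <- s) #|X|.
  by apply: (leq_bigmax_seq (nth set0 s i)) => //; exact: mem_nth.
have := leq_trans heavy (leq_trans (subset_leq_card (subsetIr _ _)) bag_le_max).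
by rewrite /pd_width; case: (\max_(X <- s) #|X|).
Qed.

End Pathwidth.

(* Two disjoint connected vertex sets of G_K never interleave along the
   Hamiltonian path, because edges of G_K do not cross. *)
Section Interleaving.
Variable K : nat.
Notation V := ('I_(bsize K)).
Notation G := (nested K).

Lemma nested_noncrossing (x y p q : V) : bedge K 0 x y -> G p q ->
  x < p < y -> (q < x) || (y < q) -> False.
Proof.
move=> Exy Hpq h1 h2; have [s1 s2 s3] := bedge_range Exy.
case/orP: Hpq => H; have [r1 r2 r3] := bedge_range H.
  by apply: (bedge_noncrossing Exy H); lia.
by apply: (bedge_noncrossing H Exy); lia.
Qed.

Lemma connected_jumps_over (S : {set V}) (a b c : V) : connected_on G S ->
  a \in S -> c \in S -> b \notin S -> a < b < c ->
  exists p q : V, [/\ p \in S, q \in S, p < b < q & bedge K 0 p q].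
Proof.
move=> cS aS cS' bS h.
have aL : a \in [set z : V | z < b] by rewrite inE; lia.
have cL : c \notin [set z : V | z < b] by rewrite inE; lia.
have [p [q [/and3P[epq pS qS] hp hq]]] :=
  connect_exit (induced_sym (@nested_sym K) S) (cS _ _ aS cS') aL cL.
move: hp hq; rewrite !inE => hp hq.
have qb : b < q.
  have : q != b by apply: contraNneq bS => <-.
  by rewrite -val_eqE /=; lia.
exists p, q; split => //; first lia.
by apply: nested_lt => //; lia.
Qed.

Lemma inside_closed (S : {set V}) (x y : V) : bedge K 0 x y ->
  x \notin S -> y \notin S -> closed (induced G S) [set z : V | x < z < y].
Proof.
move=> Exy xS yS; apply: intro_closed; first exact: induced_csym (@nested_sym K) S.
move=> u v /and3P[euv uS vS]; rewrite !inE => hu.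
have vx : v != x by apply: contraNneq xS => <-.
have vy : v != y by apply: contraNneq yS => <-.
move: vx vy; rewrite -!val_eqE /= => vx vy.
case: (boolP (x < v < y)) => // hv; exfalso.
by apply: (nested_noncrossing Exy euv hu); lia.
Qed.

Lemma no_interleaving (S S' : {set V}) (a b c d : V) : [disjoint S & S'] ->
  connected_on G S -> connected_on G S' ->
  a \in S -> c \in S -> b \in S' -> d \in S' -> a < b -> b < c -> c < d -> False.
Proof.
move=> dj cS cS' aS cS2 bS dS h1 h2 h3.
have bnS : b \notin S by rewrite (disjointFl dj bS).
have cnS' : c \notin S' by rewrite (disjointFr dj cS2).
have abc : a < b < c by rewrite h1 h2.
have bcd : b < c < d by rewrite h2 h3.
have [p [q [pS qS hpq Epq]]] := connected_jumps_over cS aS cS2 bnS abc.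
have [u [v [uS vS huv Euv]]] := connected_jumps_over cS' bS dS cnS' bcd.
have pnS' : p \notin S' by rewrite (disjointFr dj pS).
have qnS' : q \notin S' by rewrite (disjointFr dj qS).
have unS : u \notin S by rewrite (disjointFl dj uS).
have vnS : v \notin S by rewrite (disjointFl dj vS).
have := closed_connect (inside_closed Epq pnS' qnS') (cS' _ _ bS uS).
rewrite !inE hpq => /esym/andP[pu uq].
have := closed_connect (inside_closed Euv unS vnS) (cS _ _ cS2 pS).
rewrite !inE huv => /esym/andP[up _].
by move: pu up; clear; lia.
Qed.

End Interleaving.

Lemma switch_exists (f : nat -> bool) u v : u <= v -> f u != f v ->
  exists c, u < c <= v /\ f c.-1 != f c.
Proof.
elim: v => [|v IH] h.
  have -> : u = 0 by lia.
  by rewrite eqxx.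
case: (eqVneq u v.+1) => [->|huv]; first by rewrite eqxx.
case: (eqVneq (f u) (f v)) => [fe|fn] hf.
  by exists v.+1; split; [lia | rewrite /= -fe].
have [c [hc hc']] := IH (ltac:(lia)) fn.
by exists c; split => //; lia.
Qed.

Section Cuts.
Variable K : nat.
Notation V := ('I_(bsize K)).
Notation G := (nested K).
Notation n := (bsize K).
Variable A : {set V}.
Hypothesis cA : connected_on G A.
Hypothesis cB : connected_on G (~: A).

Definition side (m : nat) := [exists z : V, (z \in A) && (val z == m)].

Lemma side_val (z : V) : side z = (z \in A).
Proof.
apply/existsP/idP => [[w /andP[wA /eqP wz]]|zA]; last by exists z; rewrite zA eqxx.
by have -> : z = w by apply: val_inj.
Qed.

Definition switch c := (0 < c < n) && (side c.-1 != side c).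

Lemma sides_alternate a b c d : a < b -> b < c -> c < d -> d < n ->
  side a = side c -> side b = side d -> side a != side b -> False.
Proof.
move=> h1 h2 h3 h4.
have ha : a < n by lia.
have hb : b < n by lia.
have hc : c < n by lia.
pose oa := Ordinal ha; pose ob := Ordinal hb; pose oc := Ordinal hc; pose od := Ordinal h4.
rewrite -[a]/(val oa) -[b]/(val ob) -[c]/(val oc) -[d]/(val od).
rewrite !side_val => ac bd ab.
have dj : [disjoint A & ~: A] by rewrite -setI_eq0 setICr.
case: (boolP (oa \in A)) => ia.
  have ib' : ob \in ~: A by rewrite inE; move: ab; rewrite ia; case: (ob \in A).
  have id' : od \in ~: A by rewrite inE -bd; move: ib'; rewrite inE.
  have ic' : oc \in A by rewrite -ac.
  exact: (no_interleaving dj cA cB ia ic' ib' id' h1 h2 h3).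
have ib' : ob \in A by move: ab; rewrite (negbTE ia); case: (ob \in A).
have id' : od \in A by rewrite -bd.
have ic' : oc \in ~: A by rewrite inE -ac.
have ia' : oa \in ~: A by rewrite inE.
by apply: (no_interleaving _ cB cA ia' ic' ib' id' h1 h2 h3); rewrite disjoint_sym.
Qed.

(* Three switches x < y < z would produce four alternating positions. *)
Lemma at_most_two_switches x y z : switch x -> switch y -> switch z -> x < y -> y < z -> False.
Proof.
move=> /andP[hx fx] /andP[hy fy] /andP[hz fz] xy yz.
case e1 : (side y.-1 == side x.-1).
  move/eqP: e1 => e1.
  have hne : y.-1 != x.
    by apply/negP => /eqP hh; move: e1 fx; rewrite hh => ->; rewrite eqxx.
  by apply: (@sides_alternate x.-1 x y.-1 y); lia.
have fy1 : side y = side x.-1 by move: e1 fy; case: (side y.-1); case: (side x.-1); case: (side y).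
case e2 : (side z == side x).
  by move/eqP: e2 => e2; apply: (@sides_alternate x.-1 x y z); lia.
have e3 : side z.-1 = side x by move: e2 fz; case: (side z); case: (side x); case: (side z.-1).
have hz1 : y < z.-1.
  case: (ltnP y z.-1) => // hh; have hh' : z.-1 = y by lia.
  by move: e3; rewrite hh' fy1 => e; move: fx; rewrite e eqxx.
by apply: (@sides_alternate x.-1 x y z.-1); lia.
Qed.

Lemma switch_cover : exists c1 c2, [/\ c1 <= c2, (forall c, switch c -> c = c1 \/ c = c2) &
  (c1 < c2 -> switch c1 /\ switch c2)].
Proof.
case: (boolP [exists c : V, switch c]) => [/existsP[c0 s0]|none]; last first.
  exists 0, 0; split => // c sc; exfalso.
  have hc : c < n by case/andP: sc => /andP[].
  by move/existsP: none; apply; exists (Ordinal hc).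
have exP : exists i, switch i by exists c0.
have ubP i : switch i -> i <= n by move=> /andP[h _]; lia.
case: (ex_minnP exP) => c1 s1 m1; case: (ex_maxnP exP ubP) => c2 s2 m2.
exists c1, c2; split => [|c sc|//]; first exact: m1.
have h1 := m1 c sc; have h2 := m2 c sc.
case: (ltngtP c1 c) => [h3|h3|<-]; [|lia|by left].
case: (ltngtP c c2) => [h4|h4|->]; [|lia|by right].
by exfalso; apply: (at_most_two_switches s1 sc s2).
Qed.

Lemma side_const u v : u <= v -> v < n -> (forall c, switch c -> (c <= u) || (v < c)) ->
  side u = side v.
Proof.
move=> uv vn hc; case: (eqVneq (side u) (side v)) => // neq.
have [c [hc1 hc2]] := switch_exists uv neq.
have sc : switch c by rewrite /switch hc2 andbT; lia.
by have := hc c sc; lia.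
Qed.

Lemma two_switches_ends c1 c2 : c1 < c2 -> switch c1 -> switch c2 ->
  (forall c, switch c -> c = c1 \/ c = c2) -> side 0 = side n.-1.
Proof.
move=> h12 s1 s2 cov.
have [h1 f1] := andP s1; have [h2 f2] := andP s2.
have e1 : side 0 = side c1.-1 by apply: side_const; try lia; move=> c /cov[]->; lia.
have e2 : side c1 = side c2.-1 by apply: side_const; try lia; move=> c /cov[]->; lia.
have e3 : side c2 = side n.-1 by apply: side_const; try lia; move=> c /cov[]->; lia.
by move: f1 f2; rewrite e1 -e3 e2;
  case: (side c1.-1); case: (side c2.-1); case: (side c1); case: (side c2).
Qed.

Definition pair_set (pr : nat * nat) : {set V} :=
  [set z : V | (val z == pr.1) || (val z == pr.2)].

Lemma pair_setE (a b : V) : [set a; b] = pair_set (val a, val b).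
Proof. by apply/setP => z; rewrite !inE /= !val_eqE. Qed.

Definition end_chord : {set V} := pair_set (0, n - 1).

Definition crossing_edges c : {set {set V}} :=
  [set:: map pair_set (behead (straddle K 0 c))].

Lemma card_crossing_edges c : #|crossing_edges c| <= K.
Proof.
rewrite cardsE; apply: leq_trans (card_size _) _.
rewrite size_map size_behead; have := size_straddle K 0 c; lia.
Qed.

Lemma mem_crossing_edges c (a b : V) : 0 < c < n -> a < c <= b ->
  bedge K 0 a b -> (val a, val b) != (0, n - 1) -> [set a; b] \in crossing_edges c.
Proof.
move=> hc hab Eab ne; rewrite pair_setE inE; apply: map_f.
move: (mem_straddle Eab hab); rewrite (straddle_head (j := K) (o := 0)) ?add0n // inE.
by case/orP => // /eqP e; move: ne; rewrite e eqxx.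
Qed.

Lemma cut_edge_crossing c1 c2 (a b : V) : (forall c, switch c -> c = c1 \/ c = c2) ->
  a < b -> G a b -> side a != side b -> (val a, val b) != (0, n - 1) ->
  [set a; b] \in crossing_edges c1 :|: crossing_edges c2.
Proof.
move=> cov ab eab sab ne.
have [c [hc sc]] := switch_exists (ltnW ab) sab.
have hb := ltn_ord b.
have swc : switch c by rewrite /switch sc andbT; lia.
have : [set a; b] \in crossing_edges c.
  by apply: mem_crossing_edges => //; [lia | exact: nested_lt].
by case: (cov c swc) => <- h; rewrite inE h ?orbT.
Qed.

Lemma cut_sub_crossings c1 c2 : (forall c, switch c -> c = c1 \/ c = c2) ->
  delta G A \subset end_chord |: (crossing_edges c1 :|: crossing_edges c2).
Proof.
move=> cov; apply/subsetP => z /imset2P[a b aA bP ->].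
rewrite !inE in bP; case/andP: bP => bA eab.
have sab : side a != side b by rewrite !side_val aA (negbTE bA).
have oriented (x y : V) : x < y -> G x y -> side x != side y ->
    [set x; y] \in end_chord |: (crossing_edges c1 :|: crossing_edges c2).
  move=> xy exy sxy; case: (eqVneq (val x, val y) (0, n - 1)) => [[e1 e2]|ne].
    by rewrite pair_setE /= e1 e2 setU11.
  by apply/setU1P; right; apply: cut_edge_crossing.
case: (ltngtP a b) => hab.
- exact: oriented _ _ hab eab sab.
- by rewrite setUC; apply: oriented _ _ hab _ _; rewrite 1?nested_sym 1?eq_sym.
- by move: eab; rewrite (val_inj hab) nested_irr.
Qed.

Lemma end_chord_cut : 1 < n -> end_chord \in delta G A -> side 0 != side n.-1.
Proof.
move=> n2; have h0 : 0 < n by lia.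
have h1 : n.-1 < n by lia.
have -> : end_chord = [set Ordinal h0; Ordinal h1].
  by rewrite pair_setE /=; congr pair_set; congr pair; lia.
rewrite (mem_delta (@nested_sym K)); last exact: nested_chord.
by rewrite -(side_val (Ordinal h0)) -(side_val (Ordinal h1)).
Qed.

Lemma cut_bound : 1 <= K -> #|delta G A| <= 2 * K.
Proof.
move=> K1; have n2 : 1 < n by have := bsize_ge2 K.
have [c1 [c2 [le12 cov two]]] := switch_cover.
have sub := cut_sub_crossings cov.
case: (boolP (end_chord \in delta G A)) => chord_in.
  have e12 : c1 = c2.
    case: (ltngtP c1 c2) => // h; last lia.
    have [s1 s2] := two h; move: (end_chord_cut n2 chord_in).
    by rewrite (two_switches_ends h s1 s2 cov) eqxx.
  rewrite -e12 setUid in sub.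
  apply: leq_trans (subset_leq_card sub) _; rewrite cardsU1.
  by apply: leq_trans (leq_add (leq_b1 _) (card_crossing_edges c1)) _; lia.
have sub' : delta G A \subset crossing_edges c1 :|: crossing_edges c2.
  apply/subsetP => z zin; case/setU1P: (subsetP sub z zin) => // ze.
  by move: chord_in; rewrite -ze zin.
apply: leq_trans (subset_leq_card sub') _; rewrite cardsU mul2n -addnn.
apply: leq_trans (leq_subr _ _) _.
exact: leq_add (card_crossing_edges c1) (card_crossing_edges c2).
Qed.

End Cuts.

Theorem theorem1p5 :
  forall k : nat, 1 <= k ->
  exists (n : nat) (e : rel 'I_n),
    [/\ simple_graph e, two_connected e, pathwidth_at_least e k &
        cocircumference e <= 2 * k].
Proof.
move=> k k1; exists (bsize k), (nested k).
have two_conn := nested_2connected k1.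
split => //.
- exact: nested_simple.
- by move=> s pd; have := nested_pathwidth pd; lia.
- apply/bigmax_leqP => F bF; have [_ [conn _]] := two_conn.
  have [A [-> cA cB]] := bond_delta (@nested_sym k) (connected_on_setT conn) bF.
  exact: cut_bound cA cB k1.
Qed.
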